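(* Let $(X,\Sigma,\mu)$ be a probability space, let $\mathcal{P},\mathcal{Q},\mathcal{R}\subseteq\Sigma$ be countable partitions, and let $A\in\Sigma$ with $\mu(A)>0$. Then \[\mu(A)\,\mathrm{I}_{\mu_{|A}}(\mathcal{P};\mathcal{Q}\,|\,\mathcal{R})\le\log2+\mathrm{I}_\mu(\mathcal{P};\mathcal{Q}\,|\,\mathcal{R}).\]
   Context: $\mu_{|A}=\mu(A\cap\cdot)/\mu(A)$ is the conditioned measure. $\mathrm{I}_\mu(\mathcal{P};\mathcal{Q}\,|\,\mathcal{R})=\mathrm{H}_\mu(\mathcal{P}\,|\,\mathcal{R})-\mathrm{H}_\mu(\mathcal{P}\,|\,\mathcal{Q}\vee\mathcal{R})$ is conditional mutual information. *)

From Stdlib Require Import Reals List ClassicalEpsilon.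
Open Scope R_scope.

Definition inter {X : Type} (A B : X -> Prop) : X -> Prop := fun x => A x /\ B x.
Definition setT {X : Type} : X -> Prop := fun _ => True.
Definition setC {X : Type} (A : X -> Prop) : X -> Prop := fun x => ~ A x.
Definition bigcup {X : Type} (F : nat -> X -> Prop) : X -> Prop :=
  fun x => exists n, F n x.

Definition is_sigma_algebra {X : Type} (S : (X -> Prop) -> Prop) : Prop :=
  S setT /\
  (forall A, S A -> S (setC A)) /\
  (forall F : nat -> X -> Prop, (forall n, S (F n)) -> S (bigcup F)).

Definition pairwise_disjoint {X : Type} (F : nat -> X -> Prop) : Prop :=
  forall i j x, i <> j -> F i x -> F j x -> False.

Definition is_prob_space {X : Type} (S : (X -> Prop) -> Prop)
  (mu : (X -> Prop) -> R) : Prop :=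
  is_sigma_algebra S /\
  (forall A, S A -> 0 <= mu A) /\
  mu setT = 1 /\
  (forall F : nat -> X -> Prop, (forall n, S (F n)) -> pairwise_disjoint F ->
     infinite_sum (fun n => mu (F n)) (mu (bigcup F))).

(* A countable measurable partition, indexed by nat (finite partitions are
   padded with empty cells, which do not affect entropies). *)
Definition is_countable_partition {X : Type} (S : (X -> Prop) -> Prop)
  (P : nat -> X -> Prop) : Prop :=
  (forall n, S (P n)) /\ pairwise_disjoint P /\ (forall x, exists n, P n x).

Definition cond_measure {X : Type} (mu : (X -> Prop) -> R) (A : X -> Prop)
  : (X -> Prop) -> R := fun B => mu (inter A B) / mu A.

Definition join {X : Type} (Q R0 : nat -> X -> Prop) : nat * nat -> X -> Prop :=
  fun jk => inter (Q (fst jk)) (R0 (snd jk)).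

Inductive ER := Fin (r : R) | Inf.

Definition fsum {I : Type} (f : I -> R) (l : list I) : R :=
  fold_right (fun i acc => f i + acc) 0 l.

Definition finite_sums {I : Type} (f : I -> R) (s : R) : Prop :=
  exists l : list I, NoDup l /\ s = fsum f l.

Definition is_esum {I : Type} (f : I -> R) (e : ER) : Prop :=
  match e with
  | Fin s => is_lub (finite_sums f) s
  | Inf => ~ bound (finite_sums f)
  end.

Definition esum {I : Type} (f : I -> R) : ER :=
  epsilon (inhabits Inf) (fun e => is_esum f e).

Definition cond_entropy {X J : Type} (nu : (X -> Prop) -> R)
  (P : nat -> X -> Prop) (C : J -> X -> Prop) : ER :=
  esum (fun ij : nat * J =>
    let a := nu (inter (P (fst ij)) (C (snd ij))) in
    let b := nu (C (snd ij)) in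
    if Rlt_dec 0 a then - a * ln (a / b) else 0).

(* difference in [0,+oo]; +oo - +oo is undefined in the paper, and gets the
   arbitrary value 0 here (it never occurs under the hypotheses used). *)
Definition ER_sub (x y : ER) : ER :=
  match x, y with
  | Fin a, Fin b => Fin (a - b)
  | Inf, Fin _ => Inf
  | _, Inf => Fin 0
  end.

Definition ER_scale (c : R) (x : ER) : ER :=
  match x with Fin a => Fin (c * a) | Inf => Inf end.

Definition ER_addR (c : R) (x : ER) : ER :=
  match x with Fin a => Fin (c + a) | Inf => Inf end.

Definition ER_le (x y : ER) : Prop :=
  match x, y with
  | Fin a, Fin b => a <= b
  | _, Inf => True
  | Inf, Fin _ => False
  end.

Definition cond_mutual_info {X : Type} (nu : (X -> Prop) -> R)
  (P Q R0 : nat -> X -> Prop) : ER :=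
  ER_sub (cond_entropy nu P R0) (cond_entropy nu P (join Q R0)).

(* Write [H_nu(P | C)] as the sum of the cell terms [ent (nu (P_i ∩ C_j)) (nu C_j)],
   where [ent x y = - x ln (x / y)].  Split each cell [F] of [Q ∨ R] along [A] and its
   complement: by subadditivity of [ent] in its first argument, the term of [P_i ∩ F]
   is at most [mu A] times the term for [mu_{|A}], plus the term on [X \ A], plus the
   cost of renormalising each half.  Summed over [i], this cost is at most the binary
   entropy of the split of [F], hence at most [mu F * ln 2], and at most [ln 2] in
   total.  Summing the terms on [X \ A] over [Q] only decreases them (refinement), and
   by the log-sum inequality [mu A * H_{mu_{|A}}(P | R)] plus the [P | R]-terms on
   [X \ A] is at most [H_mu(P | R)].  This gives the inequality on finite truncations
   of all four sums, and it passes to the sums themselves. *)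

From Stdlib Require Import Reals Lra Lia List ClassicalEpsilon Classical FunctionalExtensionality PropExtensionality.
Open Scope R_scope.

Definition ent (x y : R) : R := if Rlt_dec 0 x then - x * ln (x / y) else 0.

Lemma ln_div_pos x y : 0 < x -> 0 < y -> ln (x / y) = ln x - ln y.
Proof.
  intros Hx Hy. unfold Rdiv.
  rewrite ln_mult, ln_Rinv; [ring | lra | lra | apply Rinv_0_lt_compat; lra].
Qed.

Lemma ln_le_sub1 x : 0 < x -> ln x <= x - 1.
Proof. intros Hx. pose proof (exp_ineq1_le (ln x)) as H. rewrite exp_ln in H; lra. Qed.

Lemma ln_le_ln x y : 0 < x -> x <= y -> ln x <= ln y.
Proof. intros Hx [Hxy | ->]; [left; apply ln_increasing |]; lra. Qed.

Lemma ent_le0 x y : x <= 0 -> ent x y = 0.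
Proof. intros Hx. unfold ent. destruct (Rlt_dec 0 x); lra. Qed.

Lemma ent_pos x y : 0 < x -> 0 < y -> ent x y = x * (ln y - ln x).
Proof. intros Hx Hy. unfold ent. destruct (Rlt_dec 0 x); [|lra]. rewrite ln_div_pos; lra. Qed.

Lemma ent_ge0 x y : 0 <= x -> x <= y -> 0 <= ent x y.
Proof.
  intros Hx Hxy. destruct (Rle_lt_dec x 0); [rewrite ent_le0; lra |].
  rewrite ent_pos by lra. pose proof (ln_le_ln x y r Hxy). nra.
Qed.

Lemma ent_le_ent_r x y y' : 0 <= x -> (0 < x -> 0 < y) -> y <= y' -> ent x y <= ent x y'.
Proof.
  intros Hx Hy Hyy. destruct (Rle_lt_dec x 0); [rewrite !ent_le0; lra |].
  specialize (Hy r). rewrite !ent_pos by lra.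
  pose proof (ln_le_ln y y' Hy Hyy). nra.
Qed.

(* Log-sum inequality for two terms; it follows from [ln t <= t - 1] at
   [t = y_i (x1 + x2) / (x_i (y1 + y2))]. *)
Lemma ent_add_le x1 x2 y1 y2 : 0 <= x1 -> 0 <= x2 -> 0 <= y1 -> 0 <= y2 ->
  (0 < x1 -> 0 < y1) -> (0 < x2 -> 0 < y2) ->
  ent x1 y1 + ent x2 y2 <= ent (x1 + x2) (y1 + y2).
Proof.
  intros Hx1 Hx2 Hy1 Hy2 Hxy1 Hxy2.
  destruct (Rle_lt_dec x1 0).
  { replace x1 with 0 by lra. rewrite ent_le0, !Rplus_0_l by lra.
    apply ent_le_ent_r; lra. }
  destruct (Rle_lt_dec x2 0).
  { replace x2 with 0 by lra. rewrite (ent_le0 0), !Rplus_0_r by lra.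
    apply ent_le_ent_r; lra. }
  specialize (Hxy1 r); specialize (Hxy2 r0).
  rewrite !ent_pos by lra.
  set (s := x1 + x2); set (t := y1 + y2).
  assert (gibbs : forall x y, 0 < x -> 0 < y ->
            x * (ln y - ln x) <= y * s / t - x + x * (ln t - ln s)).
  { intros x y Hx Hy.
    assert (Hs : 0 < s) by (unfold s; lra). assert (Ht : 0 < t) by (unfold t; lra).
    assert (Hpos : 0 < y * s / (x * t))
      by (apply Rdiv_lt_0_compat; apply Rmult_lt_0_compat; lra).
    pose proof (ln_le_sub1 _ Hpos) as Hln.
    rewrite ln_div_pos, !ln_mult in Hln by (try apply Rmult_lt_0_compat; lra).
    replace (y * s / t - x) with (x * (y * s / (x * t) - 1)) by (field; lra).
    assert (x * (ln y + ln s - (ln x + ln t)) <= x * (y * s / (x * t) - 1))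
      by (apply Rmult_le_compat_l; lra).
    lra. }
  pose proof (gibbs x1 y1 r Hxy1). pose proof (gibbs x2 y2 r0 Hxy2).
  assert (y1 * s / t + y2 * s / t = s) by (unfold s, t in *; field; lra).
  unfold s in *. lra.
Qed.

Lemma ent_subadd x1 x2 y : 0 <= x1 -> 0 <= x2 -> x1 + x2 <= y ->
  ent (x1 + x2) y <= ent x1 y + ent x2 y.
Proof.
  intros Hx1 Hx2 Hy. destruct (Rle_lt_dec x1 0).
  { replace x1 with 0 by lra. rewrite Rplus_0_l, (ent_le0 0); lra. }
  destruct (Rle_lt_dec x2 0).
  { replace x2 with 0 by lra. rewrite Rplus_0_r, (ent_le0 0); lra. }
  rewrite !ent_pos by lra.
  pose proof (ln_le_ln x1 (x1 + x2) r ltac:(lra)).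
  pose proof (ln_le_ln x2 (x1 + x2) r0 ltac:(lra)). nra.
Qed.

Lemma ent_div x y c : 0 < c -> c * ent (x / c) (y / c) = ent x y.
Proof.
  intros Hc. unfold ent.
  assert (E : x / c / (y / c) = x / y).
  { unfold Rdiv. rewrite Rinv_mult, Rinv_inv.
    replace (x * / c * (/ y * c)) with (x * / y * (c * / c)) by ring.
    rewrite Rinv_r; lra. }
  rewrite E. destruct (Rlt_dec 0 (x / c)), (Rlt_dec 0 x); try field; try lra.
  - exfalso. apply n. replace x with (x / c * c) by (field; lra).
    apply Rmult_lt_0_compat; lra.
  - exfalso. apply n. apply Rdiv_lt_0_compat; lra.
Qed.

Lemma ent_self x : ent x x = 0.
Proof.
  unfold ent. destruct (Rlt_dec 0 x); [|lra].
  replace (x / x) with 1 by (field; lra). rewrite ln_1; ring.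
Qed.

(* Binary entropy is at most [ln 2]: compare with the uniform split. *)
Lemma ent_binary_le a b : 0 <= a -> 0 <= b ->
  ent a (a + b) + ent b (a + b) <= (a + b) * ln 2.
Proof.
  intros Ha Hb. set (h := (a + b) / 2).
  assert (Hhalf := ent_add_le a b h h Ha Hb ltac:(unfold h; lra) ltac:(unfold h; lra)
                     ltac:(unfold h; lra) ltac:(unfold h; lra)).
  replace (h + h) with (a + b) in Hhalf by (unfold h; field). rewrite ent_self in Hhalf.
  assert (Hbase : forall x, 0 <= x -> x <= a + b -> ent x (a + b) = ent x h + x * ln 2).
  { intros x Hx Hxab. destruct (Rle_lt_dec x 0).
    - rewrite !ent_le0 by lra. replace x with 0 by lra. ring.
    - rewrite !ent_pos by (unfold h; lra). unfold h.
      rewrite ln_div_pos by lra. ring. }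
  rewrite (Hbase a), (Hbase b) by lra. lra.
Qed.

Lemma ent_change_base x a M : 0 <= x -> x <= a -> a <= M ->
  ent x M = ent x a + x * ln (M / a).
Proof.
  intros Hx Hxa HaM. destruct (Rle_lt_dec x 0).
  - rewrite !ent_le0 by lra. replace x with 0 by lra. ring.
  - rewrite !ent_pos, ln_div_pos by lra. ring.
Qed.

(* When [a = 0] the junk value [ln (M / 0)] is harmless since then [s = 0]. *)
Lemma mul_ln_ratio_le s a M : 0 <= s -> s <= a -> a <= M -> s * ln (M / a) <= ent a M.
Proof.
  intros Hs Hsa HaM. destruct (Rle_lt_dec a 0).
  - replace s with 0 by lra. rewrite ent_le0; lra.
  - rewrite ent_pos, <- ln_div_pos by lra.
    apply Rmult_le_compat_r; [|lra].
    rewrite ln_div_pos by lra. pose proof (ln_le_ln a M r HaM). lra.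
Qed.

Section FiniteSums.
Context {I : Type}.
Implicit Types (f g : I -> R) (l m : list I).

Lemma fsum_cons f a l : fsum f (a :: l) = f a + fsum f l.
Proof. reflexivity. Qed.

Lemma fsum_app f l m : fsum f (l ++ m) = fsum f l + fsum f m.
Proof. induction l as [|a l IH]; simpl; [ring | rewrite IH; ring]. Qed.

Lemma fsum_ext f g l : (forall x, In x l -> f x = g x) -> fsum f l = fsum g l.
Proof.
  induction l as [|a l IH]; intros H; simpl; [reflexivity |].
  rewrite H, IH; [reflexivity | intros; apply H; right |]; auto; left; auto.
Qed.

Lemma fsum_le f g l : (forall x, In x l -> f x <= g x) -> fsum f l <= fsum g l.
Proof.
  induction l as [|a l IH]; intros H; simpl; [lra |].
  apply Rplus_le_compat; [apply H; left | apply IH; intros; apply H; right]; auto.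
Qed.

Lemma fsum_ge0 f l : (forall x, In x l -> 0 <= f x) -> 0 <= fsum f l.
Proof.
  induction l as [|a l IH]; intros H; simpl; [lra |].
  apply Rplus_le_le_0_compat; [apply H; left | apply IH; intros; apply H; right]; auto.
Qed.

Lemma fsum_plus f g l : fsum (fun x => f x + g x) l = fsum f l + fsum g l.
Proof. induction l as [|a l IH]; simpl; [ring | rewrite IH; ring]. Qed.

Lemma fsum_minus f g l : fsum (fun x => f x - g x) l = fsum f l - fsum g l.
Proof. induction l as [|a l IH]; simpl; [ring | rewrite IH; ring]. Qed.

Lemma fsum_mull c f l : fsum (fun x => c * f x) l = c * fsum f l.
Proof. induction l as [|a l IH]; simpl; [ring | rewrite IH; ring]. Qed.

Lemma fsum_mulr c f l : fsum (fun x => f x * c) l = fsum f l * c.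
Proof. induction l as [|a l IH]; simpl; [ring | rewrite IH; ring]. Qed.

Lemma fsum_incl f l m : NoDup l -> NoDup m -> incl l m ->
  (forall x, In x m -> 0 <= f x) -> fsum f l <= fsum f m.
Proof.
  intros Hl. revert m. induction Hl as [|a l Hal Hl IH]; intros m Hm Hlm Hf.
  { apply fsum_ge0; auto. }
  destruct (in_split a m (Hlm a (or_introl eq_refl))) as (m1 & m2 & ->).
  assert (Hsplit : fsum f (m1 ++ a :: m2) = f a + fsum f (m1 ++ m2))
    by (rewrite !fsum_app, fsum_cons; ring).
  rewrite Hsplit, fsum_cons. apply Rplus_le_compat_l.
  apply IH; [eapply NoDup_remove_1; eauto | |].
    - intros y Hy. assert (Hy' := Hlm y (or_intror Hy)).
      apply in_app_or in Hy'. apply in_or_app.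
      destruct Hy' as [|[<-|]]; auto. contradiction.
    - intros y Hy. apply Hf. apply in_app_or in Hy. apply in_or_app.
      destruct Hy; [left | right; right]; auto.
Qed.

Lemma fsum_ent_le (x y : I -> R) l : (forall j, In j l -> 0 <= x j <= y j) ->
  fsum (fun j => ent (x j) (y j)) l <= ent (fsum x l) (fsum y l).
Proof.
  induction l as [|a l IH]; intros H; simpl; [rewrite ent_le0; lra |].
  assert (Ha := H a (or_introl eq_refl)).
  assert (Hl : forall j, In j l -> 0 <= x j <= y j) by (intros; apply H; right; auto).
  assert (0 <= fsum x l) by (apply fsum_ge0; intros; apply Hl; auto).
  assert (fsum x l <= fsum y l) by (apply fsum_le; intros; apply Hl; auto).
  eapply Rle_trans; [apply Rplus_le_compat_l, IH, Hl | apply ent_add_le; lra].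
Qed.

Lemma fsum_ent_refine_le (x y : I -> R) l X Y : (forall j, In j l -> 0 <= x j <= y j) ->
  fsum x l <= X -> X - fsum x l <= Y - fsum y l ->
  fsum (fun j => ent (x j) (y j)) l <= ent X Y.
Proof.
  intros Hxy HX HXY.
  assert (0 <= fsum x l) by (apply fsum_ge0; intros; apply Hxy; auto).
  assert (fsum x l <= fsum y l) by (apply fsum_le; intros; apply Hxy; auto).
  pose proof (ent_ge0 (X - fsum x l) (Y - fsum y l) ltac:(lra) HXY).
  pose proof (ent_add_le (fsum x l) (X - fsum x l) (fsum y l) (Y - fsum y l))
    as Hadd.
  replace (fsum x l + (X - fsum x l)) with X in Hadd by ring.
  replace (fsum y l + (Y - fsum y l)) with Y in Hadd by ring.
  pose proof (fsum_ent_le x y l Hxy). lra.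
Qed.

End FiniteSums.

Lemma fsum_prod {I J} (f : I * J -> R) l m :
  fsum f (list_prod l m) = fsum (fun i => fsum (fun j => f (i, j)) m) l.
Proof.
  induction l as [|a l IH]; simpl; [reflexivity |].
  rewrite fsum_app, IH. f_equal. clear IH.
  induction m as [|b m IHm]; simpl; [reflexivity | rewrite IHm; reflexivity].
Qed.

Lemma fsum_swap {I J} (f : I -> J -> R) l m :
  fsum (fun i => fsum (fun j => f i j) m) l = fsum (fun j => fsum (fun i => f i j) l) m.
Proof.
  induction l as [|a l IH]; simpl.
  - induction m as [|b m IHm]; simpl; [reflexivity | rewrite <- IHm; ring].
  - rewrite IH, <- fsum_plus. reflexivity.
Qed.

Lemma NoDup_list_prod {I J} (l : list I) (m : list J) :
  NoDup l -> NoDup m -> NoDup (list_prod l m).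
Proof.
  intros Hl Hm. induction Hl as [|a l Hal Hl IH]; simpl; [constructor |].
  apply NoDup_app; auto.
  - apply NoDup_map_NoDup_ForallPairs; auto. intros b c _ _ E; inversion E; auto.
  - intros [a' b] H1 H2. apply in_map_iff in H1 as (c & E & _). inversion E; subst.
    apply in_prod_iff in H2. tauto.
Qed.

Section ExtendedSums.
Context {I : Type}.
Implicit Types (f g : I -> R).

Lemma esum_spec f : is_esum f (esum f).
Proof.
  unfold esum. apply epsilon_spec.
  destruct (classic (bound (finite_sums f))) as [B | B].
  - destruct (completeness _ B) as [s Hs]; [exists 0, nil; split; [constructor | reflexivity] |].
    exists (Fin s). exact Hs.
  - exists Inf. exact B.
Qed.

Lemma esum_Fin_ub f s l : esum f = Fin s -> NoDup l -> fsum f l <= s.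
Proof. intros E Hl. pose proof (esum_spec f) as H. rewrite E in H. apply H. exists l; auto. Qed.

Lemma esum_Fin_lub f s c : esum f = Fin s -> (forall l, NoDup l -> fsum f l <= c) -> s <= c.
Proof.
  intros E Hc. pose proof (esum_spec f) as H. rewrite E in H.
  apply H. intros x (l & Hl & ->). auto.
Qed.

Lemma esum_Fin_of_le c f g s : 0 < c -> (forall x, c * f x <= g x) -> esum g = Fin s ->
  exists a, esum f = Fin a.
Proof.
  intros Hc Hfg Hg. pose proof (esum_spec f) as H. destruct (esum f) as [a|]; [eauto |].
  exfalso. apply H. exists (s / c). intros x (l & Hl & ->).
  apply Rmult_le_reg_l with c; [auto |].
  replace (c * (s / c)) with s by (field; lra). rewrite <- fsum_mull.
  eapply Rle_trans; [apply fsum_le; intros; apply Hfg | apply (esum_Fin_ub g s l Hg Hl)].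
Qed.

End ExtendedSums.

Lemma esum_Fin_add_lub {I J} (f : I -> R) (g : J -> R) a b c K :
  0 < c -> esum f = Fin a -> esum g = Fin b ->
  (forall l m, NoDup l -> NoDup m -> c * fsum f l + fsum g m <= K) -> c * a + b <= K.
Proof.
  intros Hc Ef Eg H.
  assert (Hb : b <= K - c * a); [|lra].
  apply (esum_Fin_lub g b _ Eg). intros m Hm.
  assert (a <= (K - fsum g m) / c); [|apply Rmult_le_compat_l with (r := c) in H0; [|lra]].
  - apply (esum_Fin_lub f a _ Ef). intros l Hl.
    apply Rmult_le_reg_l with c; [auto |].
    replace (c * ((K - fsum g m) / c)) with (K - fsum g m) by (field; lra).
    specialize (H l m Hl Hm). lra.
  - replace (c * ((K - fsum g m) / c)) with (K - fsum g m) in H0 by (field; lra). lra.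
Qed.

Definition exhausting {I} (L : nat -> list I) : Prop :=
  (forall N, NoDup (L N)) /\
  (forall l : list I, exists N0, forall N, (N0 <= N)%nat -> incl l (L N)).

Lemma exhausting_seq : exhausting (seq 0).
Proof.
  split; [intros; apply seq_NoDup |].
  intros l. induction l as [|a l [N0 HN0]]; [exists 0%nat; intros N _ x [] |].
  exists (Nat.max N0 (S a)). intros N HN x [<- | Hx].
  - apply in_seq. lia.
  - apply (HN0 N); [lia | auto].
Qed.

Lemma exhausting_prod {I J} (L : nat -> list I) (M : nat -> list J) :
  exhausting L -> exhausting M -> exhausting (fun N => list_prod (L N) (M N)).
Proof.
  intros [HL L0] [HM M0]. split; [intros; apply NoDup_list_prod; auto |].
  intros l. destruct (L0 (map fst l)) as [N1 HN1], (M0 (map snd l)) as [N2 HN2].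
  exists (Nat.max N1 N2). intros N HN [x y] Hxy. apply in_prod.
  - apply (HN1 N); [lia |]. apply (in_map fst) in Hxy. auto.
  - apply (HN2 N); [lia |]. apply (in_map snd) in Hxy. auto.
Qed.

Lemma fsum_le_exhausting {I} (L : nat -> list I) (f : I -> R) l :
  exhausting L -> (forall x, 0 <= f x) -> NoDup l ->
  exists N0, forall N, (N0 <= N)%nat -> fsum f l <= fsum f (L N).
Proof.
  intros [HL HL0] Hf Hl. destruct (HL0 l) as [N0 HN0]. exists N0.
  intros N HN. apply fsum_incl; auto.
Qed.

Lemma esum_le_of_truncations {I J} (L : nat -> list I) (M : nat -> list J)
    (f1 g1 : I -> R) (f2 g2 : J -> R) c K a1 b1 a2 b2 :
  0 < c -> exhausting L -> exhausting M ->
  (forall x, 0 <= f1 x) -> (forall y, 0 <= g2 y) ->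
  esum f1 = Fin a1 -> esum g1 = Fin b1 -> esum f2 = Fin a2 -> esum g2 = Fin b2 ->
  (forall N, c * fsum f1 (L N) + fsum g2 (M N) <= K + fsum g1 (L N) + c * fsum f2 (M N)) ->
  c * a1 + b2 <= K + b1 + c * a2.
Proof.
  intros Hc HL HM Hf1 Hg2 E1 F1 E2 F2 Htrunc.
  apply (esum_Fin_add_lub f1 g2 _ _ _ _ Hc E1 F2). intros l m Hl Hm.
  destruct (fsum_le_exhausting L f1 l HL Hf1 Hl) as [N1 HN1].
  destruct (fsum_le_exhausting M g2 m HM Hg2 Hm) as [N2 HN2].
  set (N := Nat.max N1 N2).
  specialize (HN1 N ltac:(lia)). specialize (HN2 N ltac:(lia)). specialize (Htrunc N).
  pose proof (esum_Fin_ub g1 b1 (L N) F1 (proj1 HL N)).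
  pose proof (esum_Fin_ub f2 a2 (M N) E2 (proj1 HM N)).
  assert (c * fsum f1 l <= c * fsum f1 (L N)) by (apply Rmult_le_compat_l; lra).
  assert (c * fsum f2 (M N) <= c * a2) by (apply Rmult_le_compat_l; lra).
  lra.
Qed.

Definition set0 {X : Type} : X -> Prop := fun _ => False.

Lemma set_ext {X : Type} (E F : X -> Prop) : (forall x, E x <-> F x) -> E = F.
Proof.
  intros H. apply functional_extensionality. intros x. apply propositional_extensionality, H.
Qed.

Ltac set_congr :=
  f_equal; apply set_ext; intro; unfold inter, setC, setT, set0, bigcup, join; simpl; tauto.

Definition ent_cell {X J : Type} (nu : (X -> Prop) -> R) (P : nat -> X -> Prop)
  (C : J -> X -> Prop) (ij : nat * J) : R :=
  ent (nu (inter (P (fst ij)) (C (snd ij)))) (nu (C (snd ij))).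

Lemma cond_entropy_esum {X J : Type} (nu : (X -> Prop) -> R) P (C : J -> X -> Prop) :
  cond_entropy nu P C = esum (ent_cell nu P C).
Proof. reflexivity. Qed.

Section ProbabilitySpace.
Variables (X : Type) (Sigma : (X -> Prop) -> Prop) (mu : (X -> Prop) -> R).
Hypothesis HP : is_prob_space Sigma mu.

Lemma meas_setT : Sigma setT.
Proof. apply HP. Qed.

Lemma meas_setC E : Sigma E -> Sigma (setC E).
Proof. apply HP. Qed.

Lemma meas_bigcup F : (forall n, Sigma (F n)) -> Sigma (bigcup F).
Proof. apply HP. Qed.

Lemma meas_set0 : Sigma set0.
Proof.
  replace set0 with (setC (@setT X)) by (apply set_ext; unfold setC, setT, set0; tauto).
  apply meas_setC, meas_setT.
Qed.

Lemma meas_inter E F : Sigma E -> Sigma F -> Sigma (inter E F).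
Proof.
  intros HE HF.
  replace (inter E F) with (setC (bigcup (fun n => match n with 0 => setC E | _ => setC F end))).
  - apply meas_setC, meas_bigcup. intros [|n]; apply meas_setC; auto.
  - apply set_ext. intros x. unfold setC, bigcup, inter. split.
    + intros H. split; apply NNPP; intro; apply H; [exists 0%nat | exists 1%nat]; auto.
    + intros [HEx HFx] [[|n] Hn]; auto.
Qed.

Local Hint Resolve meas_setT meas_setC meas_inter : core.

Lemma mu_ge0 E : Sigma E -> 0 <= mu E.
Proof. apply HP. Qed.

Lemma mu_set0 : mu set0 = 0.
Proof.
  destruct HP as (_ & _ & _ & Hadd).
  specialize (Hadd (fun _ => set0) (fun _ => meas_set0) (fun _ _ _ _ (H : False) _ => H)).
  replace (bigcup (fun _ : nat => set0)) with (@set0 X) in Hadd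
    by (apply set_ext; unfold bigcup, set0; firstorder).
  destruct (mu_ge0 _ meas_set0) as [Hpos | Hzero]; [exfalso | auto].
  (* the partial sums [(n + 1) mu set0] cannot converge to [mu set0] *)
  destruct (Hadd (mu set0) Hpos) as [N HN]. specialize (HN (S N) ltac:(lia)).
  rewrite sum_cte in HN. unfold Rdist in HN.
  pose proof (Rle_abs (mu set0 * INR (S (S N)) - mu set0)).
  rewrite !S_INR in *. pose proof (pos_INR N). nra.
Qed.

Lemma mu_split E F : Sigma E -> Sigma F -> mu E = mu (inter E F) + mu (inter E (setC F)).
Proof.
  intros HE HF. destruct HP as (_ & _ & _ & Hadd).
  set (G n := match n with 0 => inter E F | 1 => inter E (setC F) | _ => set0 end).
  assert (HG : forall n, Sigma (G n)).
  { intros [|[|n]]; simpl; auto using meas_inter, meas_setC, meas_set0. }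
  assert (HGd : pairwise_disjoint G).
  { intros [|[|i]] [|[|j]] x Hij; simpl; unfold inter, setC, set0; try tauto; lia. }
  assert (HE_G : E = bigcup G).
  { apply set_ext. intros x. unfold bigcup, G, inter, setC, set0. split.
    - intros Hx. destruct (classic (F x)); [exists 0%nat | exists 1%nat]; auto.
    - intros [[|[|n]] Hn]; tauto. }
  rewrite HE_G at 1. apply (uniqueness_sum (fun n => mu (G n))); [apply Hadd; auto |].
  intros eps Heps. exists 1%nat. intros [|n] Hn; [lia |].
  replace (sum_f_R0 (fun n => mu (G n)) (S n)) with (mu (G 0%nat) + mu (G 1%nat)).
  - unfold Rdist. rewrite Rminus_diag, Rabs_R0. exact Heps.
  - clear Hn. induction n as [|n IH]; [reflexivity |].
    rewrite tech5, <- IH. simpl G. rewrite mu_set0. ring.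
Qed.

Lemma mu_le E F : Sigma E -> Sigma F -> (forall x, E x -> F x) -> mu E <= mu F.
Proof.
  intros HE HF HEF. rewrite (mu_split F E HF HE).
  replace (inter F E) with E by (apply set_ext; unfold inter; firstorder).
  pose proof (mu_ge0 _ (meas_inter _ _ HF (meas_setC _ HE))). lra.
Qed.

Lemma mu_fsum_disjoint_le {J} (E : J -> X -> Prop) F l :
  (forall j, Sigma (E j)) -> (forall j j' x, j <> j' -> E j x -> E j' x -> False) ->
  Sigma F -> (forall j, In j l -> forall x, E j x -> F x) -> NoDup l ->
  fsum (fun j => mu (E j)) l <= mu F.
Proof.
  intros HE Hd HF HEF Hl. revert F HF HEF.
  induction Hl as [|a l Hal Hl IH]; intros F HF HEF; [apply mu_ge0; auto |].
  rewrite fsum_cons, (mu_split F (E a) HF (HE a)).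
  assert (HEa : forall x, E a x -> F x) by (apply HEF; left; auto).
  replace (inter F (E a)) with (E a) by (apply set_ext; unfold inter; firstorder).
  apply Rplus_le_compat_l, IH; [apply meas_inter, meas_setC; auto |].
  intros j Hj x Hx. split; [apply (HEF j); [right|]; auto |].
  intros Hax. apply (Hd j a x); auto. intros ->. contradiction.
Qed.

Lemma fsum_ent_refine_mu {J} (G : J -> X -> Prop) E F l :
  Sigma E -> Sigma F -> (forall x, E x -> F x) ->
  (forall j, Sigma (G j)) -> (forall j j' x, j <> j' -> G j x -> G j' x -> False) -> NoDup l ->
  fsum (fun j => ent (mu (inter E (G j))) (mu (inter F (G j)))) l <= ent (mu E) (mu F).
Proof.
  intros HE HF HEF HG HGd Hl.
  assert (Hdiff : forall F', Sigma F' -> mu (inter F' E) + mu (inter F' (setC E)) = mu F')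
    by (intros; symmetry; apply mu_split; auto).
  apply fsum_ent_refine_le.
  - intros j _. split; [apply mu_ge0, meas_inter; auto |].
    apply mu_le; try apply meas_inter; auto. unfold inter; firstorder.
  - apply mu_fsum_disjoint_le; try solve [intros; apply meas_inter; auto]; auto.
    + unfold inter; firstorder.
    + intros j _ x [Hx _]. auto.
  - rewrite <- (Hdiff F HF).
    replace (inter F E) with E by (apply set_ext; unfold inter; firstorder).
    assert (fsum (fun j => mu (inter F (G j)) - mu (inter E (G j))) l
            <= mu (inter F (setC E))).
    { rewrite (fsum_ext _ (fun j => mu (inter (inter F (G j)) (setC E)))).
      - apply mu_fsum_disjoint_le; try solve [intros; repeat apply meas_inter; auto].
        + unfold inter; firstorder.
        + intros j _ x [[Hx _] HnE]. split; auto.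
      - intros j _. rewrite <- (Hdiff (inter F (G j))) by (apply meas_inter; auto).
        replace (inter (inter F (G j)) E) with (inter E (G j))
          by (apply set_ext; unfold inter; firstorder).
        ring. }
    rewrite fsum_minus in H. lra.
Qed.

Section Conditioning.

Variable A : X -> Prop.
Hypotheses (HA : Sigma A) (HmA : 0 < mu A).
Variables P Q R0 : nat -> X -> Prop.
Hypotheses (HPm : forall i, Sigma (P i)) (HPd : pairwise_disjoint P).
Hypotheses (HQm : forall j, Sigma (Q j)) (HQd : pairwise_disjoint Q).
Hypotheses (HRm : forall k, Sigma (R0 k)) (HRd : pairwise_disjoint R0).

Lemma mu_split_A E : Sigma E -> mu E = mu (inter A E) + mu (inter (setC A) E).
Proof.
  intros HE. rewrite (mu_split E A HE HA). f_equal; set_congr.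
Qed.

Let compl_term (i : nat) (F : X -> Prop) : R :=
  ent (mu (inter (setC A) (inter (P i) F))) (mu (inter (setC A) F)).

(* The price of renormalising the halves [A ∩ F] and [(X \ A) ∩ F] of a cell [F]. *)
Let ln_term (i : nat) (F : X -> Prop) : R :=
  mu (inter A (inter (P i) F)) * ln (mu F / mu (inter A F))
  + mu (inter (setC A) (inter (P i) F)) * ln (mu F / mu (inter (setC A) F)).

Lemma compl_term_ge0 i F : Sigma F -> 0 <= compl_term i F.
Proof.
  intros HF. apply ent_ge0; [apply mu_ge0 | apply mu_le]; auto.
  unfold inter; tauto.
Qed.

(* Log-sum inequality for the two halves of a cell. *)
Lemma ent_cond_add_compl_le i F : Sigma F ->
  mu A * ent (cond_measure mu A (inter (P i) F)) (cond_measure mu A F) + compl_term i F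
  <= ent (mu (inter (P i) F)) (mu F).
Proof.
  intros HF. unfold cond_measure, compl_term. rewrite ent_div by auto.
  rewrite (mu_split_A (inter (P i) F)), (mu_split_A F) by auto.
  apply ent_add_le; try (apply mu_ge0; auto);
    intros Hpos; eapply Rlt_le_trans; eauto; apply mu_le; auto;
    unfold inter; tauto.
Qed.

Lemma ent_le_cond_compl i F : Sigma F ->
  ent (mu (inter (P i) F)) (mu F)
  <= mu A * ent (cond_measure mu A (inter (P i) F)) (cond_measure mu A F)
     + compl_term i F + ln_term i F.
Proof.
  intros HF. unfold cond_measure, compl_term, ln_term. rewrite ent_div by auto.
  set (a3 := mu (inter A (inter (P i) F))); set (a2 := mu (inter A F)).
  set (b3 := mu (inter (setC A) (inter (P i) F))); set (b2 := mu (inter (setC A) F)).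
  assert (a3 <= a2) by (apply mu_le; auto; unfold inter; tauto).
  assert (b3 <= b2) by (apply mu_le; auto; unfold inter; tauto).
  assert (0 <= a3) by (apply mu_ge0; auto). assert (0 <= b3) by (apply mu_ge0; auto).
  assert (Ha : mu (inter (P i) F) = a3 + b3) by (apply mu_split_A; auto).
  assert (Hb : mu F = a2 + b2) by (apply mu_split_A; auto).
  rewrite Ha. eapply Rle_trans; [apply ent_subadd; lra |].
  rewrite (ent_change_base a3 a2 (mu F)), (ent_change_base b3 b2 (mu F)) by lra. lra.
Qed.

Lemma fsum_ln_term_le F l : Sigma F -> NoDup l -> fsum (fun i => ln_term i F) l <= mu F * ln 2.
Proof.
  intros HF Hl. unfold ln_term. rewrite fsum_plus, !fsum_mulr.
  assert (Hsum : forall B, Sigma B ->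
            fsum (fun i => mu (inter B (inter (P i) F))) l <= mu (inter B F)).
  { intros B HB. apply mu_fsum_disjoint_le; auto.
    - unfold inter; firstorder.
    - intros j _ x; unfold inter; tauto. }
  pose proof (Hsum A HA). pose proof (Hsum (setC A) (meas_setC _ HA)).
  assert (HF2 := mu_split_A F HF).
  assert (0 <= mu (inter A F)) by (apply mu_ge0; auto).
  assert (0 <= mu (inter (setC A) F)) by (apply mu_ge0; auto).
  pose proof (mul_ln_ratio_le (fsum (fun i => mu (inter A (inter (P i) F))) l)
                (mu (inter A F)) (mu F)).
  pose proof (mul_ln_ratio_le (fsum (fun i => mu (inter (setC A) (inter (P i) F))) l)
                (mu (inter (setC A) F)) (mu F)).
  pose proof (ent_binary_le (mu (inter A F)) (mu (inter (setC A) F))).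
  assert (0 <= fsum (fun i => mu (inter A (inter (P i) F))) l)
    by (apply fsum_ge0; intros; apply mu_ge0; auto).
  assert (0 <= fsum (fun i => mu (inter (setC A) (inter (P i) F))) l)
    by (apply fsum_ge0; intros; apply mu_ge0; auto).
  rewrite <- HF2 in *. lra.
Qed.

Lemma fsum_compl_term_le i F l : Sigma F -> NoDup l ->
  fsum (fun j => compl_term i (inter (Q j) F)) l <= compl_term i F.
Proof.
  intros HF Hl. unfold compl_term.
  eapply Rle_trans; [| apply (fsum_ent_refine_mu Q _ _ l); auto].
  - right. apply fsum_ext. intros j _. f_equal; set_congr.
  - unfold inter; tauto.
Qed.

Lemma fsum_join_le m n : NoDup m -> NoDup n ->
  fsum (fun jk => mu (join Q R0 jk)) (list_prod m n) <= 1.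
Proof.
  intros Hm Hn. destruct HP as (_ & _ & Htot & _). rewrite <- Htot.
  apply mu_fsum_disjoint_le; auto using meas_setT, NoDup_list_prod.
  - intros [j k]; apply meas_inter; auto.
  - intros [j k] [j' k'] x Hne [Hj Hk] [Hj' Hk']; simpl in *.
    destruct (Nat.eq_dec j j') as [<-|]; [destruct (Nat.eq_dec k k') as [<-|] |]; eauto.
  - intros; exact I.
Qed.

Lemma ent_cell_ge0 {J} (C : J -> X -> Prop) : (forall j, Sigma (C j)) ->
  forall ij, 0 <= ent_cell mu P C ij.
Proof.
  intros HC [i j]. apply ent_ge0; [apply mu_ge0 | apply mu_le]; auto. unfold inter; tauto.
Qed.

Lemma ent_cell_cond_ge0 {J} (C : J -> X -> Prop) : (forall j, Sigma (C j)) ->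
  forall ij, 0 <= ent_cell (cond_measure mu A) P C ij.
Proof.
  intros HC [i j]. unfold ent_cell, cond_measure. simpl.
  assert (0 <= / mu A) by (left; apply Rinv_0_lt_compat; auto).
  apply ent_ge0; unfold Rdiv; [apply Rmult_le_pos | apply Rmult_le_compat_r]; auto.
  - apply mu_ge0; auto.
  - apply mu_le; auto. unfold inter; tauto.
Qed.

Lemma ent_cell_cond_le {J} (C : J -> X -> Prop) : (forall j, Sigma (C j)) ->
  forall ij, mu A * ent_cell (cond_measure mu A) P C ij <= ent_cell mu P C ij.
Proof.
  intros HC [i j]. pose proof (ent_cond_add_compl_le i (C j) (HC j)).
  pose proof (compl_term_ge0 i (C j) (HC j)). unfold ent_cell; simpl. lra.
Qed.

Lemma ent_cells_truncated_le l m n : NoDup l -> NoDup m -> NoDup n ->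
  let L2 := list_prod l n in let L3 := list_prod l (list_prod m n) in
  mu A * fsum (ent_cell (cond_measure mu A) P R0) L2 + fsum (ent_cell mu P (join Q R0)) L3
  <= ln 2 + fsum (ent_cell mu P R0) L2
     + mu A * fsum (ent_cell (cond_measure mu A) P (join Q R0)) L3.
Proof.
  intros Hl Hm Hn L2 L3.
  assert (HjoinM : forall jk, Sigma (join Q R0 jk)) by (intros [j k]; apply meas_inter; auto).
  assert (Hsplit : fsum (ent_cell mu P (join Q R0)) L3
    <= mu A * fsum (ent_cell (cond_measure mu A) P (join Q R0)) L3
       + fsum (fun ijk => compl_term (fst ijk) (join Q R0 (snd ijk))) L3
       + fsum (fun ijk => ln_term (fst ijk) (join Q R0 (snd ijk))) L3).
  { rewrite <- fsum_mull, <- !fsum_plus. apply fsum_le.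
    intros [i jk] _. apply ent_le_cond_compl; auto. }
  assert (Hln : fsum (fun ijk => ln_term (fst ijk) (join Q R0 (snd ijk))) L3 <= ln 2).
  { unfold L3. rewrite fsum_prod, fsum_swap. simpl.
    eapply Rle_trans; [apply fsum_le; intros jk _; apply fsum_ln_term_le; auto |].
    rewrite fsum_mulr. pose proof (fsum_join_le m n Hm Hn). pose proof ln_lt_2.
    assert (0 <= ln 2) by lra. nra. }
  assert (Hcompl : fsum (fun ijk => compl_term (fst ijk) (join Q R0 (snd ijk))) L3
    <= fsum (ent_cell mu P R0) L2 - mu A * fsum (ent_cell (cond_measure mu A) P R0) L2).
  { unfold L2, L3. rewrite <- fsum_mull, <- fsum_minus, !fsum_prod.
    apply fsum_le. intros i _. simpl. rewrite fsum_prod, fsum_swap.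
    apply fsum_le. intros k _.
    pose proof (fsum_compl_term_le i (R0 k) m (HRm k) Hm).
    pose proof (ent_cond_add_compl_le i (R0 k) (HRm k)).
    unfold ent_cell, join; simpl. lra. }
  lra.
Qed.

End Conditioning.

End ProbabilitySpace.

Theorem mainTheorem15 (X : Type) (S : (X -> Prop) -> Prop) (mu : (X -> Prop) -> R)
  (P Q R0 : nat -> X -> Prop) (A : X -> Prop) :
  is_prob_space S mu ->
  is_countable_partition S P ->
  is_countable_partition S Q ->
  is_countable_partition S R0 ->
  S A -> 0 < mu A ->
  cond_entropy mu P (join Q R0) <> Inf ->
  ER_le (ER_scale (mu A) (cond_mutual_info (cond_measure mu A) P Q R0))
        (ER_addR (ln 2) (cond_mutual_info mu P Q R0)).
Proof.
  intros HP [HPm [HPd _]] [HQm [HQd _]] [HRm [HRd _]] HA HmA Hfin.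
  assert (HjoinM : forall jk, S (join Q R0 jk))
    by (intros [j k]; apply (meas_inter X S mu HP); auto).
  assert (HcondR : forall ik, mu A * ent_cell (cond_measure mu A) P R0 ik <= ent_cell mu P R0 ik)
    by (eapply ent_cell_cond_le; eauto).
  assert (HcondQR : forall ijk, mu A * ent_cell (cond_measure mu A) P (join Q R0) ijk
                                <= ent_cell mu P (join Q R0) ijk)
    by (eapply ent_cell_cond_le; eauto).
  assert (Hf1 : forall ik, 0 <= ent_cell (cond_measure mu A) P R0 ik)
    by (eapply ent_cell_cond_ge0; eauto).
  assert (Hg2 : forall ijk, 0 <= ent_cell mu P (join Q R0) ijk)
    by (eapply ent_cell_ge0; eauto).
  unfold cond_mutual_info. rewrite !cond_entropy_esum in *.
  destruct (esum (ent_cell mu P (join Q R0))) as [h2|] eqn:E2; [|contradiction].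
  destruct (esum (ent_cell mu P R0)) as [h1|] eqn:E1; [|destruct (ER_scale _ _); exact I].
  destruct (esum_Fin_of_le _ _ _ _ HmA HcondR E1) as [a1 F1].
  destruct (esum_Fin_of_le _ _ _ _ HmA HcondQR E2) as [a2 F2].
  rewrite F1, F2. simpl.
  pose proof (exhausting_prod _ _ exhausting_seq exhausting_seq) as Hsquare.
  pose proof (exhausting_prod _ _ exhausting_seq Hsquare) as Hcube.
  assert (mu A * a1 + h2 <= ln 2 + h1 + mu A * a2); [|nra].
  apply (esum_le_of_truncations _ _ _ _ _ _ _ _ _ _ _ _ HmA Hsquare Hcube Hf1 Hg2 F1 E1 F2 E2).
  intros N. eapply ent_cells_truncated_le; eauto using seq_NoDup.
Qed.
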